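(* Let $N \in \mathbb{N}$, let $\lambda > 0$, and let $f = (f_j)_{j=1}^N,\ g = (g_j)_{j=1}^N \in [-\pi,\pi)^N$. Define $v = (v_j)_{j=1}^N \in \mathbb{R}^N$ by \[ v_j := \begin{cases} 0 & \text{if } |g_j - f_j| \le \pi,\\ \operatorname{sgn}(g_j - f_j) & \text{if } |g_j - f_j| > \pi. \end{cases} \] Then \[ \operatorname*{argmin}_{x \in [-\pi,\pi)^N} \sum_{j=1}^N \Big( d(g_j,x_j)^2 + \lambda\, d(f_j,x_j)^2 \Big) = \left( \frac{g + \lambda f}{1+\lambda} + \frac{\lambda}{1+\lambda}\, 2\pi\, v \right)_{2\pi}, \] i.e. the minimum of $x \mapsto \sum_{j=1}^N \big( d(g_j,x_j)^2 + \lambda d(f_j,x_j)^2 \big)$ over $x \in [-\pi,\pi)^N$ is attained at the displayed point.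
   Context: For $t \in \mathbb{R}$, $(t)_{2\pi}$ denotes the unique point of $[-\pi,\pi)$ with $t - (t)_{2\pi} \in 2\pi\mathbb{Z}$; for a vector it is applied componentwise. Points of the unit circle $\mathbb{S}^1$ are represented by angles in $[-\pi,\pi)$, and for $a,b \in [-\pi,\pi)$ the geodesic (arc-length) distance on the circle is $d(a,b) := \min_{k \in \mathbb{Z}} |b - a + 2\pi k| = |(b-a)_{2\pi}|$. *)

From mathcomp Require Import all_boot all_order all_algebra.
From mathcomp Require Import all_classical all_reals all_analysis.
Set Implicit Arguments. Unset Strict Implicit. Unset Printing Implicit Defensive.
Import Order.TTheory GRing.Theory Num.Theory.
Local Open Scope ring_scope.

(* (t)_{2pi}: the unique point of [-pi,pi) congruent to t modulo 2pi *)
Definition wrap2pi (R : realType) (t : R) : R :=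
  t - 2 * pi * (Num.floor ((t + pi) / (2 * pi)))%:~R.

Definition circ_dist (R : realType) (a b : R) : R := `|wrap2pi (b - a)|.

Definition objective (R : realType) (N : nat) (lambda : R)
  (f g x : 'I_N -> R) : R :=
  \sum_(j < N) (circ_dist (g j) (x j) ^+ 2 + lambda * circ_dist (f j) (x j) ^+ 2).

Definition vshift (R : realType) (N : nat) (f g : 'I_N -> R) (j : 'I_N) : R :=
  if `|g j - f j| <= pi then 0 else Num.sg (g j - f j).

Definition candidate (R : realType) (N : nat) (lambda : R) (f g : 'I_N -> R)
  (j : 'I_N) : R :=
  wrap2pi ((g j + lambda * f j) / (1 + lambda)
           + lambda / (1 + lambda) * (2 * pi) * vshift f g j).

Definition in_box (R : realType) (N : nat) (x : 'I_N -> R) : Prop :=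
  forall j, - pi <= x j < pi.

From mathcomp Require Import all_boot all_order all_algebra.
From mathcomp Require Import all_classical all_reals all_analysis.
From mathcomp Require Import ring lra zify.
Set Implicit Arguments. Unset Strict Implicit. Unset Printing Implicit Defensive.
Import Order.TTheory GRing.Theory Num.Theory.
Local Open Scope ring_scope.

(* The objective separates over coordinates, so it suffices to minimise
   d(g,x)^2 + lambda d(f,x)^2 over one circle.  Choose the lift f' = f + 2 pi v
   of f with |f' - g| <= pi, so that |f' - g| = d(g,f).  The candidate is, up
   to 2 pi, the weighted mean (g + lambda f')/(1 + lambda), whose distances to
   g and f are at most lambda d(g,f)/(1 + lambda) and d(g,f)/(1 + lambda); its
   cost is therefore at most lambda/(1 + lambda) d(g,f)^2.  Conversely, for any
   x the triangle inequality gives d(g,x) + d(f,x) >= d(g,f), and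
   (1 + lambda)(a^2 + lambda b^2) - lambda (a + b)^2 = (a - lambda b)^2 >= 0
   shows that every x costs at least lambda/(1 + lambda) d(g,f)^2. *)

Lemma sqr_add_weighted_le {R : realDomainType} (lam a b : R) : 0 <= lam ->
  lam * (a + b) ^+ 2 <= (1 + lam) * (a ^+ 2 + lam * b ^+ 2).
Proof. by move=> lam_ge0; have := sqr_ge0 (a - lam * b); nra. Qed.

Section CircleDistance.
Variable R : realType.
Implicit Types (s t a b c e w lam f g x : R) (n : int).

Lemma norm_le_shift2pi s n : `|s| <= pi -> `|s| <= `|s + 2 * pi * n%:~R|.
Proof.
move=> s_le_pi; have [->|n_neq0] := eqVneq n 0; first by rewrite mulr0 addr0.
have pi_gt0 := pi_gt0 R.
have n_ge1 : 1 <= `|n%:~R : R| by rewrite -intr_norm ler1z; lia.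
have shift_ge : 2 * pi <= `|2 * pi * n%:~R : R|.
  by rewrite normrM gtr0_norm ?ler_peMr //; lra.
have := lerB_normD (2 * pi * n%:~R) s; rewrite [_ + s]addrC; lra.
Qed.

Lemma wrap2pi_itv t : - pi <= wrap2pi t < pi.
Proof.
have pi_gt0 := pi_gt0 R.
rewrite /wrap2pi; set k := Num.floor _.
have /andP[k_le k_gt] := floor_itv ((t + pi) / (2 * pi)); rewrite -/k in k_le k_gt.
rewrite ler_pdivlMr in k_le; last lra.
rewrite ltr_pdivrMr in k_gt; last lra.
rewrite intrD in k_gt.
by apply/andP; split; lra.
Qed.

Lemma wrap2pi_shift t : exists n, wrap2pi t = t + 2 * pi * n%:~R.
Proof. by exists (- Num.floor ((t + pi) / (2 * pi))); rewrite intrN mulrN. Qed.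

Lemma norm_wrap2pi_le_pi t : `|wrap2pi t| <= pi.
Proof. by have /andP[? ?] := wrap2pi_itv t; rewrite ler_norml; apply/andP; split; lra. Qed.

Lemma norm_wrap2pi_le t n : `|wrap2pi t| <= `|t + 2 * pi * n%:~R|.
Proof.
have [k wrapE] := wrap2pi_shift t.
have -> : t + 2 * pi * n%:~R = wrap2pi t + 2 * pi * (n - k)%:~R.
  by rewrite wrapE intrB; ring.
exact/norm_le_shift2pi/norm_wrap2pi_le_pi.
Qed.

Lemma circ_dist_le_shift a b n : circ_dist a b <= `|b - a + 2 * pi * n%:~R|.
Proof. exact: norm_wrap2pi_le. Qed.

Lemma circ_dist_shift a b n : `|b - a + 2 * pi * n%:~R| <= pi ->
  circ_dist a b = `|b - a + 2 * pi * n%:~R|.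
Proof.
move=> shift_le_pi; apply/le_anti; rewrite circ_dist_le_shift /=.
have [k wrapE] := wrap2pi_shift (b - a); rewrite /circ_dist wrapE.
have -> : b - a + 2 * pi * k%:~R = b - a + 2 * pi * n%:~R + 2 * pi * (k - n)%:~R.
  by rewrite intrB; ring.
exact: norm_le_shift2pi.
Qed.

Lemma circ_distC a b : circ_dist a b = circ_dist b a.
Proof.
suff dist_le a' b' : circ_dist a' b' <= circ_dist b' a' by apply/le_anti; rewrite !dist_le.
have [k wrapE] := wrap2pi_shift (a' - b').
apply: (le_trans (circ_dist_le_shift _ _ (- k))).
have -> : b' - a' + 2 * pi * (- k)%:~R = - wrap2pi (a' - b') by rewrite wrapE intrN; ring.
by rewrite normrN.
Qed.

Lemma circ_dist_triangle a b c : circ_dist a b <= circ_dist a c + circ_dist c b.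
Proof.
have [k1 wrapE1] := wrap2pi_shift (c - a); have [k2 wrapE2] := wrap2pi_shift (b - c).
apply: (le_trans (circ_dist_le_shift _ _ (k1 + k2))).
have -> : b - a + 2 * pi * (k1 + k2)%:~R = wrap2pi (c - a) + wrap2pi (b - c).
  by rewrite wrapE1 wrapE2 intrD; ring.
exact: ler_normD.
Qed.

Lemma circ_dist_scale_le e a b n w : 0 <= e ->
  e * (b - a + 2 * pi * n%:~R) = w -> e * circ_dist a b <= `|w|.
Proof. by move=> e_ge0 <-; rewrite normrM ger0_norm // ler_wpM2l // circ_dist_le_shift. Qed.

Definition circ_cost (lam f g x : R) : R :=
  circ_dist g x ^+ 2 + lam * circ_dist f x ^+ 2.

Lemma circ_cost_lower lam f g x : 0 <= lam ->
  lam * circ_dist g f ^+ 2 <= (1 + lam) * circ_cost lam f g x.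
Proof.
move=> lam_ge0.
apply: le_trans (sqr_add_weighted_le (circ_dist g x) (circ_dist f x) lam_ge0).
rewrite ler_wpM2l // lerXn2r ?nnegrE ?addr_ge0 ?normr_ge0 //.
by rewrite (circ_distC f x) circ_dist_triangle.
Qed.

Lemma circ_cost_weighted_mean lam f g n : 0 < lam ->
  `|f - g + 2 * pi * n%:~R| <= pi ->
  (1 + lam) * circ_cost lam f g
    (wrap2pi ((g + lam * f) / (1 + lam) + lam / (1 + lam) * (2 * pi) * n%:~R))
  <= lam * circ_dist g f ^+ 2.
Proof.
move=> lam_gt0 lift_le_pi; set c := wrap2pi _; have [k cE] := wrap2pi_shift
  ((g + lam * f) / (1 + lam) + lam / (1 + lam) * (2 * pi) * n%:~R); rewrite -/c in cE.
have lam1_neq0 : 1 + lam != 0 by rewrite gt_eqF //; lra.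
rewrite (circ_dist_shift lift_le_pi); set A := `|_|.
have dist_gc : (1 + lam) * circ_dist g c <= lam * A.
  rewrite /A -[lam in X in _ <= X](gtr0_norm lam_gt0) -normrM.
  by apply: (circ_dist_scale_le (n := - k)); [lra | rewrite cE intrN; field].
have dist_fc : (1 + lam) * circ_dist f c <= A.
  rewrite /A -normrN.
  by apply: (circ_dist_scale_le (n := - k - n)); [lra | rewrite cE intrB intrN; field].
rewrite /circ_cost; set p := circ_dist g c in dist_gc *; set q := circ_dist f c in dist_fc *.
have [p_ge0 q_ge0 A_ge0] : [/\ 0 <= p, 0 <= q & 0 <= A] by rewrite !normr_ge0.
have dist_gc2 : ((1 + lam) * p) ^+ 2 <= (lam * A) ^+ 2.
  by rewrite lerXn2r // ?nnegrE; nra.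
have dist_fc2 : ((1 + lam) * q) ^+ 2 <= A ^+ 2 by rewrite lerXn2r // ?nnegrE; nra.
rewrite -(@ler_pM2l _ (1 + lam)); last lra.
nra.
Qed.

Lemma circ_cost_weighted_mean_min lam f g n x : 0 < lam ->
  `|f - g + 2 * pi * n%:~R| <= pi ->
  circ_cost lam f g
    (wrap2pi ((g + lam * f) / (1 + lam) + lam / (1 + lam) * (2 * pi) * n%:~R))
  <= circ_cost lam f g x.
Proof.
move=> lam_gt0 lift_le_pi; rewrite -(@ler_pM2l _ (1 + lam)); last lra.
apply: le_trans (circ_cost_weighted_mean lam_gt0 lift_le_pi) _.
by apply: circ_cost_lower; lra.
Qed.

Lemma vshift_lift N (f g : 'I_N -> R) j : in_box f -> in_box g ->
  exists v : int, vshift f g j = v%:~R /\ `|f j - g j + 2 * pi * v%:~R| <= pi.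
Proof.
move=> /(_ j) /andP[f_ge f_lt] /(_ j) /andP[g_ge g_lt]; rewrite /vshift.
have pi_gt0 := pi_gt0 R.
case: ifPn => [close | /negbTE far].
  by exists 0; rewrite mulr0 addr0 distrC.
have [gf_gt0 | gf_le0] := ltrP 0 (g j - f j).
  exists 1; rewrite gtr0_sg //; split => //.
  rewrite gtr0_norm // in far; rewrite ler_norml; apply/andP; split; lra.
have gf_lt0 : g j - f j < 0.
  by rewrite lt_neqAle gf_le0 andbT; apply: contraFneq far => ->; rewrite normr0 ltW.
exists (-1); rewrite ltr0_sg //; split => //.
rewrite ltr0_norm // in far; rewrite ler_norml; apply/andP; split; lra.
Qed.

End CircleDistance.

Theorem theorem2 (R : realType) (N : nat) (lambda : R) (f g : 'I_N -> R) :
  0 < lambda -> in_box f -> in_box g ->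
  in_box (candidate lambda f g) /\
  (forall x : 'I_N -> R, in_box x ->
     objective lambda f g (candidate lambda f g) <= objective lambda f g x).
Proof.
move=> lambda_gt0 f_box g_box; split => [j | x _]; first exact: wrap2pi_itv.
apply: ler_sum => j _.
have [v [vE lift_le_pi]] := vshift_lift j f_box g_box.
by rewrite /candidate vE; apply: circ_cost_weighted_mean_min.
Qed.
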